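(* The forgetful functor $U\colon\mathbf{Lens}\to\mathbf{Cat}$ creates pushouts of monic lenses with discrete opfibrations. Explicitly: let $J\colon\mathbf{A}\to\mathbf{B}$ be a monic lens and $F\colon\mathbf{A}\to\mathbf{C}$ a lens whose get functor is a discrete opfibration, and let $\bar F\colon\mathbf{B}\to\mathbf{D}$, $\bar J\colon\mathbf{C}\to\mathbf{D}$ be a pushout of $UJ$ and $UF$ in $\mathbf{Cat}$. Then there are unique lenses with get functors $\bar F$ and $\bar J$, and with these lens structures $\bar F\circ J=\bar J\circ F$ is a pushout square in $\mathbf{Lens}$.
   Context: A lens $F\colon \mathbf{A}\to\mathbf{B}$ between small categories consists of a functor $F\colon\mathbf{A}\to\mathbf{B}$ (the get functor) together with, for each object $A$ of $\mathbf{A}$, a function $\varphi_{F,A}$ from the set of morphisms of $\mathbf{B}$ with domain $FA$ to the set of morphisms of $\mathbf{A}$ with domain $A$, such that: $F(\varphi_{F,A}b)=b$; $\varphi_{F,A}(\mathrm{id}_{FA})=\mathrm{id}_A$; and $\varphi_{F,A}(b'\circ b)=\varphi_{F,A'}(b')\circ\varphi_{F,A}(b)$ whenever $b$ has domain $FA$, $A'$ is the codomain of $\varphi_{F,A}b$, and $b'$ has domain $FA'$. $\mathbf{Lens}$ is the category of small categories and lenses, with composite of $F\colon\mathbf{A}\to\mathbf{B}$, $G\colon\mathbf{B}\to\mathbf{C}$ having get functor $G\circ F$ and puts $\varphi_{G\circ F,A}(c)=\varphi_{F,A}(\varphi_{G,FA}(c))$. $U\colon\mathbf{Lens}\to\mathbf{Cat}$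 sends a lens to its get functor. A functor $F\colon\mathbf{A}\to\mathbf{B}$ is a discrete opfibration if for each object $A$ and each morphism $b$ of $\mathbf{B}$ with domain $FA$ there is a unique morphism $a$ of $\mathbf{A}$ with domain $A$ and $Fa=b$; a discrete opfibration has exactly one lens structure. ''Monic lens'' means monomorphism in $\mathbf{Lens}$. *)

(* A small category presented single-sortedly: a type of objects, a type of
   morphisms, domain/codomain, identities, and composition [cmp g f] = g ∘ f,
   which is only meaningful (and only constrained) when [cod f = dom g]. *)
Record Cat := {
  ob : Type;
  mor : Type;
  dom : mor -> ob;
  cod : mor -> ob;
  idm : ob -> mor;
  cmp : mor -> mor -> mor;
  dom_idm : forall x, dom (idm x) = x;
  cod_idm : forall x, cod (idm x) = x;
  dom_cmp : forall f g, cod f = dom g -> dom (cmp g f) = dom f;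
  cod_cmp : forall f g, cod f = dom g -> cod (cmp g f) = cod g;
  cmp_idl : forall f, cmp (idm (cod f)) f = f;
  cmp_idr : forall f, cmp f (idm (dom f)) = f;
  cmp_assoc : forall f g h, cod f = dom g -> cod g = dom h ->
                cmp h (cmp g f) = cmp (cmp h g) f
}.

Arguments dom {c} _.
Arguments cod {c} _.
Arguments idm {c} _.
Arguments cmp {c} _ _.

Record FunD (A B : Cat) := {
  fo : ob A -> ob B;
  fm : mor A -> mor B
}.
Arguments fo {A B} _ _.
Arguments fm {A B} _ _.

Definition is_functor {A B : Cat} (F : FunD A B) : Prop :=
  (forall f, dom (fm F f) = fo F (dom f)) /\
  (forall f, cod (fm F f) = fo F (cod f)) /\
  (forall x, fm F (idm x) = idm (fo F x)) /\
  (forall f g, cod f = dom g -> fm F (cmp g f) = cmp (fm F g) (fm F f)).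

Definition fun_eq {A B : Cat} (F G : FunD A B) : Prop :=
  (forall x, fo F x = fo G x) /\ (forall f, fm F f = fm G f).

Definition fcomp {A B C : Cat} (G : FunD B C) (F : FunD A B) : FunD A C :=
  {| fo := fun x => fo G (fo F x); fm := fun f => fm G (fm F f) |}.

Definition discrete_opfibration {A B : Cat} (F : FunD A B) : Prop :=
  forall (x : ob A) (b : mor B), dom b = fo F x ->
    exists! a : mor A, dom a = x /\ fm F a = b.

(* Lens structure (puts) on a functor F: p x b = φ_{F,x}(b), meaningful for
   dom b = F x. *)
Definition is_lens_structure {A B : Cat} (F : FunD A B)
    (p : ob A -> mor B -> mor A) : Prop :=
  (forall x b, dom b = fo F x -> dom (p x b) = x /\ fm F (p x b) = b) /\
  (forall x, p x (idm (fo F x)) = idm x) /\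
  (forall x b b', dom b = fo F x -> dom b' = fo F (cod (p x b)) ->
     p x (cmp b' b) = cmp (p (cod (p x b)) b') (p x b)).

Record LensD (A B : Cat) := {
  lget : FunD A B;
  lput : ob A -> mor B -> mor A
}.
Arguments lget {A B} _.
Arguments lput {A B} _ _ _.

Definition is_lens {A B : Cat} (L : LensD A B) : Prop :=
  is_functor (lget L) /\ is_lens_structure (lget L) (lput L).

Definition lens_eq {A B : Cat} (L M : LensD A B) : Prop :=
  fun_eq (lget L) (lget M) /\
  (forall x b, dom b = fo (lget L) x -> lput L x b = lput M x b).

Definition lcomp {A B C : Cat} (G : LensD B C) (F : LensD A B) : LensD A C :=
  {| lget := fcomp (lget G) (lget F);
     lput := fun x c => lput F x (lput G (fo (lget F) x) c) |}.

Definition lens_monic {A B : Cat} (J : LensD A B) : Prop :=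
  forall (X : Cat) (G H : LensD X A), is_lens G -> is_lens H ->
    lens_eq (lcomp J G) (lcomp J H) -> lens_eq G H.

Definition is_pushout_cat {A B C D : Cat} (J : FunD A B) (F : FunD A C)
    (Fb : FunD B D) (Jb : FunD C D) : Prop :=
  fun_eq (fcomp Fb J) (fcomp Jb F) /\
  forall (X : Cat) (P : FunD B X) (Q : FunD C X),
    is_functor P -> is_functor Q -> fun_eq (fcomp P J) (fcomp Q F) ->
    exists K : FunD D X,
      is_functor K /\ fun_eq (fcomp K Fb) P /\ fun_eq (fcomp K Jb) Q /\
      (forall K' : FunD D X, is_functor K' ->
         fun_eq (fcomp K' Fb) P -> fun_eq (fcomp K' Jb) Q -> fun_eq K' K).

Definition is_pushout_lens {A B C D : Cat} (J : LensD A B) (F : LensD A C)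
    (Fb : LensD B D) (Jb : LensD C D) : Prop :=
  lens_eq (lcomp Fb J) (lcomp Jb F) /\
  forall (X : Cat) (P : LensD B X) (Q : LensD C X),
    is_lens P -> is_lens Q -> lens_eq (lcomp P J) (lcomp Q F) ->
    exists K : LensD D X,
      is_lens K /\ lens_eq (lcomp K Fb) P /\ lens_eq (lcomp K Jb) Q /\
      (forall K' : LensD D X, is_lens K' ->
         lens_eq (lcomp K' Fb) P -> lens_eq (lcomp K' Jb) Q -> lens_eq K' K).

From Stdlib Require Import ClassicalEpsilon ProofIrrelevance.

(* The two projections out of the kernel pair of J are lenses that J equalizes,
   so a monic lens has a get functor injective on objects and morphisms.  The
   pushout of such a J along a discrete opfibration F can then be modelled
   concretely: glue C onto B along the image of J, sending a morphism k of B that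
   enters the image at J a, followed by m : F a -> c, to J (φ_F(a, m)) ∘ k.  In
   the model both coprojections are discrete opfibrations; the given pushout D
   embeds into it as a retract, so Fb and Jb are discrete opfibrations as well,
   and hence carry unique lens structures.  The square commutes in Lens because
   both composite puts are lifts along the discrete opfibration Jb ∘ F.  Every
   object of D is of the form Jb c or Fb b, and a cocone (P, Q) of lenses yields
   puts for the mediating functor by pushing the puts of Q, respectively P,
   forward along Jb, respectively Fb; the two agree where both apply because
   P ∘ J = Q ∘ F as lenses. *)

Section FunctorLaws.
Context {X Y : Cat} {G : FunD X Y}.

Lemma fm_dom : is_functor G -> forall f, dom (fm G f) = fo G (dom f).
Proof. now intros [H _]. Qed.

Lemma fm_cod : is_functor G -> forall f, cod (fm G f) = fo G (cod f).
Proof. now intros [_ [H _]]. Qed.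

Lemma fm_idm : is_functor G -> forall x, fm G (idm x) = idm (fo G x).
Proof. now intros [_ [_ [H _]]]. Qed.

Lemma fm_cmp : is_functor G ->
  forall f g, cod f = dom g -> fm G (cmp g f) = cmp (fm G g) (fm G f).
Proof. now intros [_ [_ [_ H]]]. Qed.

Context {p : ob X -> mor Y -> mor X}.

Lemma put_dom : is_lens_structure G p ->
  forall x b, dom b = fo G x -> dom (p x b) = x.
Proof. intros [H _] x b hb. exact (proj1 (H x b hb)). Qed.

Lemma get_put : is_lens_structure G p ->
  forall x b, dom b = fo G x -> fm G (p x b) = b.
Proof. intros [H _] x b hb. exact (proj2 (H x b hb)). Qed.

Lemma put_idm : is_lens_structure G p -> forall x, p x (idm (fo G x)) = idm x.
Proof. now intros [_ [H _]]. Qed.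

Lemma put_cmp : is_lens_structure G p ->
  forall x b b', dom b = fo G x -> dom b' = fo G (cod (p x b)) ->
  p x (cmp b' b) = cmp (p (cod (p x b)) b') (p x b).
Proof. now intros [_ [_ H]]. Qed.

Lemma put_fm_injective : is_functor G -> is_lens_structure G p ->
  (forall f g, fm G f = fm G g -> f = g) ->
  forall x f, dom f = x -> p x (fm G f) = f.
Proof.
  intros HG Hp Hinj x f hf. apply Hinj, (get_put Hp).
  now rewrite (fm_dom HG), hf.
Qed.

End FunctorLaws.

Definition fid (X : Cat) : FunD X X := {| fo := fun x => x; fm := fun f => f |}.

Lemma fid_functor (X : Cat) : is_functor (fid X).
Proof. repeat split. Qed.

Lemma fun_eq_trans {X Y : Cat} (G1 G2 G3 : FunD X Y) :
  fun_eq G1 G2 -> fun_eq G2 G3 -> fun_eq G1 G3.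
Proof.
  intros [Eo Em] [Eo' Em']. split; intro; [rewrite Eo; apply Eo' | rewrite Em; apply Em'].
Qed.

Lemma fun_eq_fcomp_l {X Y Z : Cat} (K : FunD Y Z) (G G' : FunD X Y) :
  fun_eq G G' -> fun_eq (fcomp K G) (fcomp K G').
Proof. intros [Eo Em]. split; intro; simpl; [now rewrite Eo | now rewrite Em]. Qed.

Lemma fcomp_functor {X Y Z : Cat} (G : FunD Y Z) (F : FunD X Y) :
  is_functor G -> is_functor F -> is_functor (fcomp G F).
Proof.
  intros HG HF. repeat split; simpl.
  - intro f. now rewrite (fm_dom HG), (fm_dom HF).
  - intro f. now rewrite (fm_cod HG), (fm_cod HF).
  - intro x. now rewrite (fm_idm HF), (fm_idm HG).
  - intros f g e. rewrite (fm_cmp HF) by exact e.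
    apply (fm_cmp HG). now rewrite (fm_cod HF), (fm_dom HF), e.
Qed.

Definition lens_laws_at {X Y : Cat} (G : FunD X Y) (p : ob X -> mor Y -> mor X)
    (x : ob X) : Prop :=
  (forall b, dom b = fo G x -> dom (p x b) = x /\ fm G (p x b) = b) /\
  p x (idm (fo G x)) = idm x /\
  (forall b b', dom b = fo G x -> dom b' = fo G (cod (p x b)) ->
     p x (cmp b' b) = cmp (p (cod (p x b)) b') (p x b)).

Lemma lens_structure_of_laws_at {X Y : Cat} (G : FunD X Y) p :
  (forall x, lens_laws_at G p x) -> is_lens_structure G p.
Proof.
  intro H. split; [|split]; intro x; apply (H x).
Qed.

Lemma lcomp_lens {X Y Z : Cat} (G : LensD Y Z) (F : LensD X Y) :
  is_lens G -> is_lens F -> is_lens (lcomp G F).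
Proof.
  intros [HGf HGp] [HFf HFp]. split; [now apply fcomp_functor|].
  unfold is_lens_structure; cbn [lcomp lget lput fcomp fo fm]. split; [|split].
  - intros x c hc. split; [now apply (put_dom HFp), (put_dom HGp)|].
    rewrite (get_put HFp) by now apply (put_dom HGp). now apply (get_put HGp).
  - intro x. now rewrite (put_idm HGp), (put_idm HFp).
  - intros x c c' hc hc'.
    set (y := lput G (fo (lget F) x) c).
    assert (hy : dom y = fo (lget F) x) by now apply (put_dom HGp).
    assert (ecod : fo (lget F) (cod (lput F x y)) = cod y).
    { now rewrite <- (fm_cod HFf), (get_put HFp). }
    fold y in hc'. rewrite ecod in hc' |- *.
    rewrite (put_cmp HGp) by assumption. fold y.
    apply (put_cmp HFp); [exact hy|].
    rewrite ecod. now apply (put_dom HGp).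
Qed.

Lemma lens_laws_at_image {Y Z X : Cat} (G : FunD Y Z) (L : LensD Y X) (K : FunD Z X)
    (p : ob Z -> mor X -> mor Z) :
  is_functor G -> is_lens L -> is_functor K -> fun_eq (fcomp K G) (lget L) ->
  (forall y e, dom e = fo (lget L) y -> p (fo G y) e = fm G (lput L y e)) ->
  forall y, lens_laws_at K p (fo G y).
Proof.
  intros HG [HLf HLp] HK [Eo Em] Hp y. simpl in Eo, Em.
  split; [|split].
  - intros e he. rewrite Eo in he. rewrite (Hp y e he), (fm_dom HG), (put_dom HLp) by exact he.
    split; [reflexivity|]. now rewrite Em, (get_put HLp).
  - rewrite Eo, Hp by apply dom_idm. now rewrite (put_idm HLp), (fm_idm HG).
  - intros e e' he he'. rewrite Eo in he. rewrite (Hp y e he) in he' |- *.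
    rewrite (fm_cod HG), Eo in he'. rewrite (fm_cod HG), (Hp _ e' he').
    assert (hc : cod e = dom e') by now rewrite he', <- (fm_cod HLf), (get_put HLp).
    rewrite Hp by now rewrite dom_cmp.
    rewrite (put_cmp HLp y e e' he he'). apply (fm_cmp HG).
    symmetry. now apply (put_dom HLp).
Qed.

Lemma iso_lens {X Y : Cat} (G : FunD X Y) (H : FunD Y X) :
  is_functor G -> is_functor H ->
  (forall x, fo H (fo G x) = x) -> (forall b, fm G (fm H b) = b) ->
  is_lens {| lget := G; lput := fun _ b => fm H b |}.
Proof.
  intros HG HH HGHo HGHm. split; [exact HG|]. cbn [lget lput].
  split; [|split].
  - intros x b hb. split; [|apply HGHm]. now rewrite (fm_dom HH), hb.
  - intro x. now rewrite (fm_idm HH), HGHo.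
  - intros x b b' hb hb'. apply (fm_cmp HH).
    now rewrite hb', <- (fm_cod HG), HGHm.
Qed.

Definition dput {X Y : Cat} (G : FunD X Y) (x : ob X) (b : mor Y) : mor X :=
  epsilon (inhabits (idm x)) (fun a => dom a = x /\ fm G a = b).

Section DiscreteOpfibration.
Context {X Y : Cat} {G : FunD X Y}.
Hypothesis HGd : discrete_opfibration G.

Lemma dput_lift x b : dom b = fo G x -> dom (dput G x b) = x /\ fm G (dput G x b) = b.
Proof.
  intro hb. apply (epsilon_spec _ (fun a => dom a = x /\ fm G a = b)).
  destruct (HGd x b hb) as [a [Ha _]]. now exists a.
Qed.

Lemma dput_unique x b a : dom b = fo G x -> dom a = x -> fm G a = b -> a = dput G x b.
Proof.
  intros hb ha hGa. destruct (HGd x b hb) as [u [_ Hu]].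
  rewrite <- (Hu a (conj ha hGa)). apply Hu, dput_lift, hb.
Qed.

Lemma lens_structure_dput p : is_lens_structure G p ->
  forall x b, dom b = fo G x -> p x b = dput G x b.
Proof.
  intros Hp x b hb. apply dput_unique; [exact hb | |]; now apply Hp.
Qed.

Hypothesis HG : is_functor G.

Lemma dput_fm x a : dom a = x -> dput G x (fm G a) = a.
Proof.
  intro ha. symmetry. apply dput_unique; [|exact ha|reflexivity].
  now rewrite (fm_dom HG), ha.
Qed.

Lemma dput_lens : is_lens_structure G (dput G).
Proof.
  split; [|split].
  - exact dput_lift.
  - intro x. rewrite <- (fm_idm HG). apply dput_fm, dom_idm.
  - intros x b b' hb hb'. destruct (dput_lift x b hb) as [h1 h2].
    destruct (dput_lift _ b' hb') as [h3 h4].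
    assert (e : cod (dput G x b) = dom (dput G _ b')) by now rewrite h3.
    rewrite <- h2, <- h4 at 1. rewrite <- (fm_cmp HG) by exact e.
    apply dput_fm. now rewrite dom_cmp.
Qed.

Lemma dopf_put_fm p : is_lens_structure G p -> forall x a, dom a = x -> p x (fm G a) = a.
Proof.
  intros Hp x a ha. rewrite (lens_structure_dput p Hp); [now apply dput_fm|].
  now rewrite (fm_dom HG), ha.
Qed.

End DiscreteOpfibration.

Lemma discrete_opfibration_fcomp {X Y Z : Cat} (H : FunD Y Z) (G : FunD X Y) :
  is_functor G -> discrete_opfibration G -> discrete_opfibration H ->
  discrete_opfibration (fcomp H G).
Proof.
  intros HG HGd HHd x c hc.
  destruct (HHd (fo G x) c hc) as [b [[hb hHb] Hb]].
  destruct (HGd x b hb) as [a [[ha hGa] Ha]].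
  exists a. split; [split; [exact ha | simpl; now rewrite hGa]|].
  intros a' [ha' hHa']. apply Ha. split; [exact ha'|].
  symmetry. apply Hb. split; [now rewrite (fm_dom HG), ha' | exact hHa'].
Qed.

Lemma discrete_opfibration_fun_eq {X Y : Cat} (G G' : FunD X Y) :
  fun_eq G G' -> discrete_opfibration G' -> discrete_opfibration G.
Proof.
  intros [Eo Em] HGd x b hb. rewrite Eo in hb.
  destruct (HGd x b hb) as [a [[ha hGa] Ha]].
  exists a. split; [split; [exact ha | now rewrite Em]|].
  intros a' [ha' hGa']. apply Ha. split; [exact ha' | now rewrite <- Em].
Qed.

Lemma discrete_opfibration_cancel {X Y Z : Cat} (H : FunD Y Z) (G : FunD X Y) :
  is_functor H -> (forall f g, fm H f = fm H g -> f = g) ->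
  discrete_opfibration (fcomp H G) -> discrete_opfibration G.
Proof.
  intros HH Hinj HHGd x b hb.
  assert (hHb : dom (fm H b) = fo (fcomp H G) x) by (simpl; now rewrite (fm_dom HH), hb).
  destruct (HHGd x _ hHb) as [a [[ha hHGa] Ha]].
  exists a. split; [split; [exact ha | now apply Hinj]|].
  intros a' [ha' hGa']. apply Ha. split; [exact ha' | simpl; now rewrite hGa'].
Qed.

Lemma pushout_endo_id {A B C D : Cat} (J : FunD A B) (F : FunD A C)
    (Fb : FunD B D) (Jb : FunD C D) (K : FunD D D) :
  is_pushout_cat J F Fb Jb -> is_functor Fb -> is_functor Jb -> is_functor K ->
  fun_eq (fcomp K Fb) Fb -> fun_eq (fcomp K Jb) Jb -> fun_eq K (fid D).
Proof.
  intros [Hcomm Huniv] HFb HJb HK HKF HKJ.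
  destruct (Huniv D Fb Jb HFb HJb Hcomm) as [M [_ [_ [_ HM]]]].
  destruct (HM K HK HKF HKJ) as [EKo EKm].
  destruct (HM (fid D) (fid_functor D)) as [Eo Em]; [now split.. |].
  split; intro; [rewrite EKo; symmetry; apply Eo | rewrite EKm; symmetry; apply Em].
Qed.

Lemma sig_eq {T : Type} {P : T -> Prop} (u v : sig P) : proj1_sig u = proj1_sig v -> u = v.
Proof. apply eq_sig_hprop. intros. apply proof_irrelevance. Qed.

Section KernelPair.
Context {A B : Cat} (J : LensD A B).
Hypotheses (HJf : is_functor (lget J)) (HJp : is_lens_structure (lget J) (lput J)).
Local Notation jo := (fo (lget J)).
Local Notation jm := (fm (lget J)).
Local Notation pj := (lput J).

Definition kp_ob := {p : ob A * ob A | jo (fst p) = jo (snd p)}.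
Definition kp_mor := {q : mor A * mor A | jm (fst q) = jm (snd q)}.

Local Notation "x .1" := (fst (proj1_sig x)) (at level 1, left associativity, format "x .1").
Local Notation "x .2" := (snd (proj1_sig x)) (at level 1, left associativity, format "x .2").

Lemma kp_dom_ok (q : kp_mor) : jo (dom q.1) = jo (dom q.2).
Proof. rewrite <- !(fm_dom HJf). f_equal. exact (proj2_sig q). Qed.

Lemma kp_cod_ok (q : kp_mor) : jo (cod q.1) = jo (cod q.2).
Proof. rewrite <- !(fm_cod HJf). f_equal. exact (proj2_sig q). Qed.

Lemma kp_idm_ok (x : kp_ob) : jm (idm x.1) = jm (idm x.2).
Proof. rewrite !(fm_idm HJf). f_equal. exact (proj2_sig x). Qed.

Definition kp_dom (q : kp_mor) : kp_ob := exist _ (dom q.1, dom q.2) (kp_dom_ok q).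
Definition kp_cod (q : kp_mor) : kp_ob := exist _ (cod q.1, cod q.2) (kp_cod_ok q).
Definition kp_idm (x : kp_ob) : kp_mor := exist _ (idm x.1, idm x.2) (kp_idm_ok x).

Definition kp_composable (g f : kp_mor) : Prop := cod f.1 = dom g.1 /\ cod f.2 = dom g.2.

Lemma kp_cmp_ok (g f : kp_mor) :
  kp_composable g f -> jm (cmp g.1 f.1) = jm (cmp g.2 f.2).
Proof.
  intros [e1 e2]. rewrite !(fm_cmp HJf) by assumption.
  f_equal; [exact (proj2_sig g) | exact (proj2_sig f)].
Qed.

Definition kp_cmp (g f : kp_mor) : kp_mor :=
  match excluded_middle_informative (kp_composable g f) with
  | left h => exist _ (cmp g.1 f.1, cmp g.2 f.2) (kp_cmp_ok g f h)
  | right _ => f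
  end.

Lemma kp_cmp_eq (g f : kp_mor) :
  kp_composable g f -> proj1_sig (kp_cmp g f) = (cmp g.1 f.1, cmp g.2 f.2).
Proof. intro h. unfold kp_cmp. now destruct excluded_middle_informative. Qed.

Lemma kp_composable_of (f g : kp_mor) : kp_cod f = kp_dom g -> kp_composable g f.
Proof. intro e. split; [exact (f_equal (fun x => x.1) e) | exact (f_equal (fun x => x.2) e)].
Qed.

Definition KP : Cat.
Proof.
  refine (@Build_Cat kp_ob kp_mor kp_dom kp_cod kp_idm kp_cmp _ _ _ _ _ _ _).
  - intro x. apply sig_eq. simpl. now rewrite !dom_idm, <- surjective_pairing.
  - intro x. apply sig_eq. simpl. now rewrite !cod_idm, <- surjective_pairing.
  - intros f g e. apply sig_eq. pose proof (kp_composable_of f g e) as [e1 e2].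
    simpl. rewrite kp_cmp_eq by now split. simpl. now rewrite !dom_cmp.
  - intros f g e. apply sig_eq. pose proof (kp_composable_of f g e) as [e1 e2].
    simpl. rewrite kp_cmp_eq by now split. simpl. now rewrite !cod_cmp.
  - intro f. apply sig_eq. rewrite kp_cmp_eq by (split; symmetry; apply dom_idm).
    simpl. now rewrite !cmp_idl, <- surjective_pairing.
  - intro f. apply sig_eq. rewrite kp_cmp_eq by (split; apply cod_idm).
    simpl. now rewrite !cmp_idr, <- surjective_pairing.
  - intros f g h e1 e2. apply sig_eq.
    pose proof (kp_composable_of f g e1) as [e11 e12].
    pose proof (kp_composable_of g h e2) as [e21 e22].
    assert (h_gf : kp_composable h (kp_cmp g f)).
    { unfold kp_composable. rewrite kp_cmp_eq by now split. simpl.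
      now rewrite !cod_cmp. }
    assert (hg_f : kp_composable (kp_cmp h g) f).
    { unfold kp_composable. rewrite kp_cmp_eq by now split. simpl.
      now rewrite !dom_cmp. }
    rewrite (kp_cmp_eq _ _ h_gf), (kp_cmp_eq _ _ hg_f), !kp_cmp_eq by now split.
    simpl. now rewrite !cmp_assoc.
Defined.

Definition kp_fst : FunD KP A :=
  @Build_FunD KP A (fun x : kp_ob => x.1) (fun q : kp_mor => q.1).

Definition kp_swap : FunD KP KP :=
  @Build_FunD KP KP
    (fun x : kp_ob => exist _ (x.2, x.1) (eq_sym (proj2_sig x)))
    (fun q : kp_mor => exist _ (q.2, q.1) (eq_sym (proj2_sig q))).

Lemma kp_fst_functor : is_functor kp_fst.
Proof.
  repeat split. intros f g e. simpl. now rewrite kp_cmp_eq by now apply kp_composable_of.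
Qed.

Lemma kp_swap_functor : is_functor kp_swap.
Proof.
  repeat split; intros; apply sig_eq; try reflexivity.
  assert (h := kp_composable_of f g H).
  simpl. rewrite !kp_cmp_eq by now destruct h. reflexivity.
Qed.

Lemma kp_fst_put_ok (x : kp_ob) (f : mor A) :
  dom f = x.1 -> jm f = jm (pj x.2 (jm f)).
Proof.
  intro hf. symmetry. apply (get_put HJp).
  rewrite (fm_dom HJf), hf. exact (proj2_sig x).
Qed.

Definition kp_fst_put (x : kp_ob) (f : mor A) : kp_mor :=
  match excluded_middle_informative (dom f = x.1) with
  | left h => exist _ (f, pj x.2 (jm f)) (kp_fst_put_ok x f h)
  | right _ => kp_idm x
  end.

Lemma kp_fst_put_eq x f : dom f = x.1 -> proj1_sig (kp_fst_put x f) = (f, pj x.2 (jm f)).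
Proof. intro h. unfold kp_fst_put. now destruct excluded_middle_informative. Qed.

Lemma kp_fst_put_cmp (x : kp_ob) (b b' : mor A) :
  dom b = x.1 -> dom b' = (kp_cod (kp_fst_put x b)).1 ->
  kp_fst_put x (cmp b' b) =
  kp_cmp (kp_fst_put (kp_cod (kp_fst_put x b)) b') (kp_fst_put x b).
Proof.
  intros hb hb'. set (y := kp_cod (kp_fst_put x b)) in *.
  pose proof (kp_fst_put_eq x b hb) as Hq.
  pose proof (kp_fst_put_eq y b' hb') as Hr.
  set (p := pj x.2 (jm b)) in Hq.
  assert (hy : proj1_sig y = (cod b, cod p)) by (unfold y; simpl; now rewrite Hq).
  assert (hjb : dom (jm b) = jo x.2).
  { rewrite (fm_dom HJf), hb. exact (proj2_sig x). }
  assert (hjb' : dom (jm b') = jo (cod p)).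
  { rewrite (fm_dom HJf), hb', hy. simpl. rewrite <- !(fm_cod HJf).
    unfold p. now rewrite (get_put HJp). }
  rewrite hy in Hr. simpl in Hr.
  assert (hcomp : kp_composable (kp_fst_put y b') (kp_fst_put x b)).
  { unfold kp_composable. rewrite Hq, Hr. simpl. split.
    - now rewrite hb', hy.
    - symmetry. now apply (put_dom HJp). }
  apply sig_eq. rewrite (kp_cmp_eq _ _ hcomp), Hq, Hr.
  rewrite kp_fst_put_eq by (rewrite dom_cmp; [exact hb | now rewrite hb', hy]).
  simpl. rewrite (fm_cmp HJf) by (now rewrite hb', hy).
  f_equal. now apply (put_cmp HJp).
Qed.

Definition kp_fst_lens : LensD KP A := {| lget := kp_fst; lput := kp_fst_put |}.

Lemma kp_fst_lens_is_lens : is_lens kp_fst_lens.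
Proof.
  split; [exact kp_fst_functor|]. split; [|split].
  - intros x b hb. simpl in hb. split; [|simpl; now rewrite kp_fst_put_eq].
    apply sig_eq. simpl. rewrite kp_fst_put_eq by exact hb. simpl.
    rewrite hb, (put_dom HJp); [symmetry; apply surjective_pairing|].
    rewrite (fm_dom HJf), hb. exact (proj2_sig x).
  - intro x. apply sig_eq. simpl. rewrite kp_fst_put_eq by apply dom_idm.
    now rewrite (fm_idm HJf), (proj2_sig x), (put_idm HJp).
  - exact kp_fst_put_cmp.
Qed.

Lemma lens_monic_injective : lens_monic J ->
  (forall a a', jo a = jo a' -> a = a') /\ (forall f g, jm f = jm g -> f = g).
Proof.
  intro HM.
  set (swap_lens := {| lget := kp_swap; lput := fun _ q => fm kp_swap q |}).
  assert (Hswap : is_lens swap_lens)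
    by (apply iso_lens; try apply kp_swap_functor; intros [[u v] e]; now apply sig_eq).
  assert (Hsnd := lcomp_lens kp_fst_lens swap_lens kp_fst_lens_is_lens Hswap).
  assert (Heq : lens_eq (lcomp J kp_fst_lens) (lcomp J (lcomp kp_fst_lens swap_lens))).
  { split; [split; [intros [x e] | intros [q e]]; exact e|].
    intros x c hc. simpl in hc |- *.
    assert (hc2 : dom c = jo x.2) by (rewrite hc; exact (proj2_sig x)).
    apply sig_eq. simpl.
    rewrite !kp_fst_put_eq by (simpl; now apply (put_dom HJp)).
    simpl. now rewrite !(get_put HJp). }
  destruct (HM _ _ _ kp_fst_lens_is_lens Hsnd Heq) as [[Eo Em] _].
  split.
  - intros a a' e. exact (Eo (exist _ (a, a') e)).
  - intros f g e. exact (Em (exist _ (f, g) e)).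
Qed.
End KernelPair.

Section Model.
Context {A B C : Cat} {J : LensD A B} {F : LensD A C}.
Hypotheses (HJf : is_functor (lget J)) (HJp : is_lens_structure (lget J) (lput J)).
Hypothesis HJo : forall a a', fo (lget J) a = fo (lget J) a' -> a = a'.
Hypothesis HJm : forall f g, fm (lget J) f = fm (lget J) g -> f = g.
Hypotheses (HFf : is_functor (lget F)) (HFp : is_lens_structure (lget F) (lput F)).
Hypothesis HFd : discrete_opfibration (lget F).
Local Notation jo := (fo (lget J)).
Local Notation jm := (fm (lget J)).
Local Notation pj := (lput J).
Local Notation Fo := (fo (lget F)).
Local Notation Fm := (fm (lget F)).
Local Notation pf := (lput F).

Definition preim (b : ob B) : option (ob A) :=
  match excluded_middle_informative (exists a, jo a = b) with
  | left h => Some (proj1_sig (constructive_indefinite_description _ h))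
  | right _ => None
  end.

Variant preim_spec (b : ob B) : option (ob A) -> Prop :=
  | PreimSome a : jo a = b -> preim_spec b (Some a)
  | PreimNone : (forall a, jo a <> b) -> preim_spec b None.

Lemma preimP b : preim_spec b (preim b).
Proof.
  unfold preim. destruct excluded_middle_informative as [h|h].
  - destruct constructive_indefinite_description as [a ha]. now constructor.
  - constructor. intros a ha. apply h. now exists a.
Qed.

Lemma preim_jo a : preim (jo a) = Some a.
Proof.
  destruct (preimP (jo a)) as [a' e|n]; [now rewrite (HJo _ _ e) | now destruct (n a)].
Qed.

Lemma preim_none b : (forall a, jo a <> b) -> preim b = None.
Proof. intro n. destruct (preimP b) as [a ha|]; [now destruct (n a) | reflexivity]. Qed.

Lemma cod_in_image a k : dom k = jo a -> cod k = jo (cod (pj a k)).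
Proof. intro hk. now rewrite <- (fm_cod HJf), (get_put HJp). Qed.

Variant image_mor_spec (k : mor B) : option (ob A) -> option (ob A) -> Prop :=
  | MorInside a : dom k = jo a -> image_mor_spec k (Some a) (Some (cod (pj a k)))
  | MorEntering a : preim (dom k) = None -> cod k = jo a -> image_mor_spec k None (Some a)
  | MorOutside : preim (dom k) = None -> preim (cod k) = None -> image_mor_spec k None None.

Lemma image_morP k : image_mor_spec k (preim (dom k)) (preim (cod k)).
Proof.
  destruct (preimP (dom k)) as [a ha|n].
  - rewrite (cod_in_image a k (eq_sym ha)), preim_jo. now constructor.
  - destruct (preimP (cod k)) as [a ha|n'].
    + constructor; [now apply preim_none | easy].
    + constructor; now apply preim_none.
Qed.

(* Only the objects [inr b] with [b] outside the image of J and the morphisms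
   [inr k] with [dom k] outside it are meant; the others are junk that the
   comparison functor from the given pushout never reaches. *)
Definition po_ob : Type := ob C + ob B.
Definition po_mor : Type := mor C + mor B.

Definition po_of (b : ob B) : po_ob :=
  match preim b with Some a => inl (Fo a) | None => inr b end.

Definition po_dom (f : po_mor) : po_ob :=
  match f with inl m => inl (dom m) | inr k => inr (dom k) end.

Definition po_cod (f : po_mor) : po_ob :=
  match f with
  | inl m => inl (cod m)
  | inr k => match preim (dom k) with Some _ => inr (cod k) | None => po_of (cod k) end
  end.

Definition po_idm (x : po_ob) : po_mor :=
  match x with inl c => inl (idm c) | inr b => inr (idm b) end.

Definition po_cmp (g f : po_mor) : po_mor :=
  match g, f with
  | inl m', inl m => inl (cmp m' m)
  | inr k', inr k => inr (cmp k' k)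
  | inl m, inr k =>
      match preim (dom k), preim (cod k) with
      | None, Some a => inr (cmp (jm (pf a m)) k)
      | _, _ => inr k
      end
  | inr _, inl m => inl m
  end.

Lemma preim_dom_none k : preim (cod k) = None -> preim (dom k) = None.
Proof. now destruct (image_morP k). Qed.

Lemma po_cod_inr_inr k b : po_cod (inr k) = inr b -> cod k = b.
Proof. unfold po_cod, po_of. destruct (image_morP k); congruence. Qed.

Lemma po_cod_inr_inl k c : po_cod (inr k) = inl c ->
  exists a, preim (dom k) = None /\ cod k = jo a /\ Fo a = c.
Proof.
  unfold po_cod, po_of. destruct (image_morP k) as [| a hn e |]; try discriminate.
  intro h. injection h. now exists a.
Qed.

Lemma po_cmp_enter m k a : preim (dom k) = None -> cod k = jo a ->
  po_cmp (inl m) (inr k) = inr (cmp (jm (pf a m)) k).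
Proof. intros hn e. simpl. now rewrite hn, e, preim_jo. Qed.

Lemma dom_jm_pf a m : dom m = Fo a -> dom (jm (pf a m)) = jo a.
Proof. intro hm. now rewrite (fm_dom HJf), (put_dom HFp). Qed.

Lemma po_dom_idm x : po_dom (po_idm x) = x.
Proof. destruct x; simpl; now rewrite dom_idm. Qed.

Lemma po_cod_idm x : po_cod (po_idm x) = x.
Proof.
  destruct x as [c|b]; simpl; [now rewrite cod_idm|].
  rewrite dom_idm, cod_idm. unfold po_of. now destruct (preim b).
Qed.

Lemma po_dom_cmp f g : po_cod f = po_dom g -> po_dom (po_cmp g f) = po_dom f.
Proof.
  destruct f as [m|k], g as [m'|k']; intro H; try reflexivity.
  - simpl. injection H as e. now rewrite dom_cmp.
  - destruct (po_cod_inr_inl k _ H) as [a [hn [e he]]].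
    rewrite (po_cmp_enter m' k a hn e). simpl. rewrite dom_cmp; [reflexivity|].
    now rewrite dom_jm_pf.
  - simpl. now rewrite dom_cmp by exact (po_cod_inr_inr k _ H).
Qed.

Lemma po_cod_cmp f g : po_cod f = po_dom g -> po_cod (po_cmp g f) = po_cod g.
Proof.
  destruct f as [m|k], g as [m'|k']; intro H; try discriminate H.
  - simpl. injection H as e. now rewrite cod_cmp.
  - destruct (po_cod_inr_inl k _ H) as [a [hn [e he]]].
    rewrite (po_cmp_enter m' k a hn e).
    assert (hk : cod k = dom (jm (pf a m'))) by now rewrite dom_jm_pf.
    simpl. rewrite dom_cmp, cod_cmp, hn by exact hk.
    unfold po_of. rewrite (fm_cod HJf), preim_jo, <- (fm_cod HFf), (get_put HFp) by auto.
    reflexivity.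
  - pose proof (po_cod_inr_inr k _ H) as e. revert H.
    unfold po_cod, po_of. simpl. rewrite dom_cmp, cod_cmp, <- e by exact e.
    destruct (image_morP k); simpl; intro h; try discriminate; reflexivity.
Qed.

Lemma po_cmp_idl f : po_cmp (po_idm (po_cod f)) f = f.
Proof.
  destruct f as [m|k]; [simpl; now rewrite cmp_idl|].
  unfold po_cod, po_of. destruct (image_morP k) as [a ha | a hn e | hn hn'].
  - simpl. now rewrite cmp_idl.
  - cbn [po_idm]. rewrite (po_cmp_enter _ k a hn e), (put_idm HFp), (fm_idm HJf), <- e.
    now rewrite cmp_idl.
  - simpl. now rewrite cmp_idl.
Qed.

Lemma po_cmp_idr f : po_cmp f (po_idm (po_dom f)) = f.
Proof. destruct f; simpl; now rewrite cmp_idr. Qed.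

Lemma po_cmp_assoc_enter k m2 m3 a :
  preim (dom k) = None -> cod k = jo a -> dom m2 = Fo a -> cod m2 = dom m3 ->
  po_cmp (inl m3) (po_cmp (inl m2) (inr k)) = po_cmp (inl (cmp m3 m2)) (inr k).
Proof.
  intros hn e hm2 e2. rewrite !(po_cmp_enter _ k a hn e).
  set (p := pf a m2).
  assert (hp : dom p = a) by now apply (put_dom HFp).
  assert (hk : cod k = dom (jm p)) by (unfold p; now rewrite dom_jm_pf).
  assert (hm3 : dom m3 = Fo (cod p)).
  { unfold p. now rewrite <- (fm_cod HFf), (get_put HFp), e2. }
  rewrite (po_cmp_enter m3 _ (cod p)).
  - rewrite (put_cmp HFp a m2 m3 hm2 hm3). fold p.
    rewrite (fm_cmp HJf) by (symmetry; now apply (put_dom HFp)).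
    f_equal. apply cmp_assoc; [exact hk|].
    now rewrite (fm_cod HJf), (fm_dom HJf), (put_dom HFp).
  - now rewrite dom_cmp.
  - rewrite cod_cmp by exact hk. apply (fm_cod HJf).
Qed.

Lemma po_cmp_assoc f g h : po_cod f = po_dom g -> po_cod g = po_dom h ->
  po_cmp h (po_cmp g f) = po_cmp (po_cmp h g) f.
Proof.
  destruct f as [m1|k1], g as [m2|k2], h as [m3|k3]; intros H1 H2;
    try discriminate H1; try discriminate H2; try reflexivity.
  - simpl. injection H1 as e1. injection H2 as e2. now rewrite cmp_assoc.
  - destruct (po_cod_inr_inl k1 _ H1) as [a [hn [e he]]]. injection H2 as e2.
    apply (po_cmp_assoc_enter k1 m2 m3 a); auto.
  - pose proof (po_cod_inr_inr k1 _ H1) as e1.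
    destruct (po_cod_inr_inl k2 _ H2) as [a [hn [e he]]].
    assert (hn1 : preim (dom k1) = None) by (apply preim_dom_none; now rewrite e1).
    rewrite (po_cmp_enter m3 k2 a hn e).
    change (po_cmp (inr k2) (inr k1)) with (inr (cmp k2 k1) : po_mor).
    rewrite (po_cmp_enter m3 (cmp k2 k1) a); [| now rewrite dom_cmp | now rewrite cod_cmp].
    simpl. rewrite cmp_assoc; [reflexivity | exact e1 |]. now rewrite dom_jm_pf.
  - simpl. now rewrite cmp_assoc by eauto using po_cod_inr_inr.
Qed.

Definition PO : Cat :=
  @Build_Cat po_ob po_mor po_dom po_cod po_idm po_cmp po_dom_idm po_cod_idm
    po_dom_cmp po_cod_cmp po_cmp_idl po_cmp_idr po_cmp_assoc.

Definition po_inB_mor (k : mor B) : po_mor :=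
  match preim (dom k) with Some a => inl (Fm (pj a k)) | None => inr k end.

Definition po_inB : FunD B PO := @Build_FunD B PO po_of po_inB_mor.
Definition po_inC : FunD C PO := @Build_FunD C PO inl inl.

Lemma po_inB_mor_in a k : dom k = jo a -> po_inB_mor k = inl (Fm (pj a k)).
Proof. intro hk. unfold po_inB_mor. now rewrite hk, preim_jo. Qed.

Lemma po_inB_mor_out k : preim (dom k) = None -> po_inB_mor k = inr k.
Proof. intro hn. unfold po_inB_mor. now rewrite hn. Qed.

Lemma po_inB_functor : is_functor po_inB.
Proof.
  split; [|split; [|split]]; simpl.
  - intro k. unfold po_inB_mor, po_of. destruct (preimP (dom k)) as [a ha|n]; simpl.
    + now rewrite (fm_dom HFf), (put_dom HJp).
    + reflexivity.
  - intro k. unfold po_inB_mor, po_cod, po_of.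
    destruct (image_morP k) as [a ha | a hn e | hn hn']; simpl.
    + now rewrite (fm_cod HFf).
    + now rewrite hn, e, preim_jo.
    + now rewrite hn, hn'.
  - intro b. unfold po_inB_mor, po_of. rewrite dom_idm.
    destruct (preimP b) as [a <-|n]; simpl; [|reflexivity].
    now rewrite (put_idm HJp), (fm_idm HFf).
  - intros k k' e. unfold po_inB_mor. rewrite dom_cmp, <- e by exact e.
    destruct (image_morP k) as [a ha | a hn ec | hn hn'].
    + assert (hk' : dom k' = jo (cod (pj a k))) by now rewrite <- e, <- cod_in_image.
      simpl. rewrite (put_cmp HJp a k k' ha hk'), (fm_cmp HFf); [reflexivity|].
      symmetry. now apply (put_dom HJp).
    + assert (hk' : dom k' = jo a) by now rewrite <- e.
      rewrite (po_cmp_enter _ k a hn ec), (dopf_put_fm HFd HFf _ HFp)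
        by now apply (put_dom HJp).
      now rewrite (get_put HJp).
    + reflexivity.
Qed.

Lemma po_inC_functor : is_functor po_inC.
Proof. repeat split. Qed.

Lemma po_inB_inC_comm : fun_eq (fcomp po_inB (lget J)) (fcomp po_inC (lget F)).
Proof.
  split; simpl.
  - intro a. unfold po_of. now rewrite preim_jo.
  - intro f. rewrite (po_inB_mor_in (dom f)) by apply (fm_dom HJf).
    now rewrite (put_fm_injective HJf HJp HJm).
Qed.

Lemma po_inB_dopf : discrete_opfibration po_inB.
Proof.
  intros b d. simpl. unfold po_of. destruct (preimP b) as [a <-|n].
  - destruct d as [m|k]; intro hd; [|discriminate]. injection hd as hm.
    exists (jm (pf a m)). split; [split|].
    + now apply dom_jm_pf.
    + simpl. rewrite (po_inB_mor_in a) by now apply dom_jm_pf.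
      rewrite (put_fm_injective HJf HJp HJm) by now apply (put_dom HFp).
      now rewrite (get_put HFp).
    + intros k [hk Hk]. simpl in Hk. rewrite (po_inB_mor_in a k hk) in Hk.
      injection Hk as Hk.
      rewrite <- Hk, (dopf_put_fm HFd HFf _ HFp) by now apply (put_dom HJp).
      now apply (get_put HJp).
  - destruct d as [m|k]; intro hd; [discriminate|]. injection hd as hk.
    assert (hn : preim (dom k) = None) by (rewrite hk; now apply preim_none).
    exists k. split; [split; [exact hk | simpl; now apply po_inB_mor_out]|].
    intros k' [hk' Hk']. simpl in Hk'.
    rewrite po_inB_mor_out in Hk' by (rewrite hk'; now rewrite <- hk).
    now injection Hk'.
Qed.

Lemma po_inC_dopf : discrete_opfibration po_inC.
Proof.
  intros c [m|k] hd; [|discriminate]. injection hd as hm.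
  exists m. split; [now split|]. intros m' [_ e]. now injection e.
Qed.

Section Copair.
Context {X : Cat} (P : FunD B X) (Q : FunD C X).
Hypotheses (HP : is_functor P) (HQ : is_functor Q).
Hypothesis HPQ : fun_eq (fcomp P (lget J)) (fcomp Q (lget F)).

Definition po_copair : FunD PO X :=
  @Build_FunD PO X
    (fun x : po_ob => match x with inl c => fo Q c | inr b => fo P b end)
    (fun f : po_mor => match f with inl m => fm Q m | inr k => fm P k end).

Lemma po_copair_functor : is_functor po_copair.
Proof.
  split; [|split; [|split]].
  - intros [m|k]; simpl; [apply (fm_dom HQ) | apply (fm_dom HP)].
  - intros [m|k]; [apply (fm_cod HQ)|]. simpl. unfold po_cod, po_of.
    rewrite (fm_cod HP).
    destruct (image_morP k) as [| a hn e |]; simpl; [reflexivity | | reflexivity].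
    rewrite e. exact (proj1 HPQ a).
  - intros [c|b]; simpl; [apply (fm_idm HQ) | apply (fm_idm HP)].
  - intros [m|k] [m'|k'] H; try discriminate H.
    + simpl. injection H as e. now apply (fm_cmp HQ).
    + destruct (po_cod_inr_inl k _ H) as [a [hn [e he]]].
      change (fm po_copair (po_cmp (inl m') (inr k)) = cmp (fm Q m') (fm P k)).
      rewrite (po_cmp_enter m' k a hn e). simpl.
      rewrite (fm_cmp HP) by now rewrite dom_jm_pf.
      change (fm P (jm (pf a m'))) with (fm (fcomp P (lget J)) (pf a m')).
      rewrite (proj2 HPQ). simpl. now rewrite (get_put HFp).
    + simpl. apply (fm_cmp HP). exact (po_cod_inr_inr k _ H).
Qed.

Lemma po_copair_inB : fun_eq (fcomp po_copair po_inB) P.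
Proof.
  split; simpl.
  - intro b. unfold po_of. destruct (preimP b) as [a <-|n]; [|reflexivity].
    symmetry. exact (proj1 HPQ a).
  - intro k. unfold po_inB_mor. destruct (preimP (dom k)) as [a ha|n]; [|reflexivity].
    simpl. change (fm Q (Fm (pj a k))) with (fm (fcomp Q (lget F)) (pj a k)).
    rewrite <- (proj2 HPQ). simpl. now rewrite (get_put HJp).
Qed.

Lemma po_copair_inC : fun_eq (fcomp po_copair po_inC) Q.
Proof. now split. Qed.
End Copair.
End Model.

Section LensPushout.
Context {A B C D : Cat} {J : LensD A B} {F : LensD A C} {Fb : FunD B D} {Jb : FunD C D}.
Hypotheses (HJf : is_functor (lget J)) (HJp : is_lens_structure (lget J) (lput J)).
Hypothesis HJo : forall a a', fo (lget J) a = fo (lget J) a' -> a = a'.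
Hypothesis HJm : forall f g, fm (lget J) f = fm (lget J) g -> f = g.
Hypotheses (HFf : is_functor (lget F)) (HFp : is_lens_structure (lget F) (lput F)).
Hypothesis HFd : discrete_opfibration (lget F).
Hypotheses (HFb : is_functor Fb) (HJb : is_functor Jb).
Hypothesis Hpush : is_pushout_cat (lget J) (lget F) Fb Jb.
Local Notation PO := (PO HJf HJp HJo HFf HFp).
Local Notation po_inB := (po_inB HJf HJp HJo HFf HFp).
Local Notation po_inC := (po_inC HJf HJp HJo HFf HFp).

Variable Psi : FunD D PO.
Hypotheses (HPsi : is_functor Psi) (HPsiB : fun_eq (fcomp Psi Fb) po_inB)
  (HPsiC : fun_eq (fcomp Psi Jb) po_inC).

Lemma Psi_Fb_ob b : fo Psi (fo Fb b) = fo po_inB b.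
Proof. exact (proj1 HPsiB b). Qed.

Lemma Psi_Jb_ob c : fo Psi (fo Jb c) = inl c.
Proof. exact (proj1 HPsiC c). Qed.

Let Phi := po_copair HJf HJp HJo HFf HFp Fb Jb.

Lemma pushout_model_retract : fun_eq (fcomp Phi Psi) (fid D).
Proof.
  destruct Hpush as [Hcomm _].
  apply (pushout_endo_id _ _ _ _ _ Hpush HFb HJb).
  - apply fcomp_functor; [now apply po_copair_functor | exact HPsi].
  - apply (fun_eq_trans _ (fcomp Phi po_inB)); [exact (fun_eq_fcomp_l Phi _ _ HPsiB)|].
    now apply po_copair_inB.
  - apply (fun_eq_trans _ (fcomp Phi po_inC)); [exact (fun_eq_fcomp_l Phi _ _ HPsiC)|].
    now apply po_copair_inC.
Qed.

Lemma pushout_model_fm_injective : forall f g, fm Psi f = fm Psi g -> f = g.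
Proof.
  intros f g e.
  transitivity (fm (fcomp Phi Psi) f); [symmetry; apply pushout_model_retract|].
  transitivity (fm (fcomp Phi Psi) g); [simpl; now rewrite e | apply pushout_model_retract].
Qed.

Lemma pushout_ob_cases x : (exists c, x = fo Jb c) \/ (exists b, x = fo Fb b).
Proof.
  pose proof (proj1 pushout_model_retract x) as e. revert e. simpl.
  destruct (fo Psi x) as [c|b]; intro e; [left; now exists c | right; now exists b].
Qed.

Lemma pushout_Fb_dopf : discrete_opfibration Fb.
Proof.
  apply (discrete_opfibration_cancel Psi Fb HPsi pushout_model_fm_injective).
  apply (discrete_opfibration_fun_eq _ _ HPsiB). now apply po_inB_dopf.
Qed.

Lemma pushout_Jb_dopf : discrete_opfibration Jb.
Proof.
  apply (discrete_opfibration_cancel Psi Jb HPsi pushout_model_fm_injective).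
  apply (discrete_opfibration_fun_eq _ _ HPsiC). apply po_inC_dopf.
Qed.

Let FbL : LensD B D := {| lget := Fb; lput := dput Fb |}.
Let JbL : LensD C D := {| lget := Jb; lput := dput Jb |}.

Lemma FbL_lens : is_lens FbL.
Proof. split; [exact HFb | exact (dput_lens pushout_Fb_dopf HFb)]. Qed.

Lemma JbL_lens : is_lens JbL.
Proof. split; [exact HJb | exact (dput_lens pushout_Jb_dopf HJb)]. Qed.

Lemma lens_pushout_square : lens_eq (lcomp FbL J) (lcomp JbL F).
Proof.
  destruct Hpush as [Hcomm _]. split; [exact Hcomm|].
  intros a d hd.
  assert (hd' : dom d = fo (fcomp Jb (lget F)) a) by (rewrite hd; apply Hcomm).
  assert (HG : discrete_opfibration (fcomp Jb (lget F)))
    by (apply discrete_opfibration_fcomp; [exact HFf | exact HFd | exact pushout_Jb_dopf]).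
  destruct (lcomp_lens FbL J FbL_lens (conj HJf HJp)) as [_ [HL _]].
  destruct (lcomp_lens JbL F JbL_lens (conj HFf HFp)) as [_ [HR _]].
  destruct (HL a d hd) as [hl1 hl2]. destruct (HR a d hd') as [hr1 hr2].
  change (fm (fcomp Fb (lget J)) (lput (lcomp FbL J) a d) = d) in hl2.
  rewrite (proj2 Hcomm) in hl2.
  now rewrite (dput_unique HG a d _ hd' hl1 hl2), (dput_unique HG a d _ hd' hr1 hr2).
Qed.

Section Universal.
Context {X : Cat} (P : LensD B X) (Q : LensD C X).
Hypotheses (HP : is_lens P) (HQ : is_lens Q) (HPQ : lens_eq (lcomp P J) (lcomp Q F)).

Definition mediator_put (x : ob D) (e : mor X) : mor D :=
  match fo Psi x with
  | inl c => fm Jb (lput Q c e)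
  | inr b => fm Fb (lput P b e)
  end.

Lemma mediator_put_Jb c e : mediator_put (fo Jb c) e = fm Jb (lput Q c e).
Proof. unfold mediator_put. now rewrite Psi_Jb_ob. Qed.

Lemma mediator_put_Fb b e :
  dom e = fo (lget P) b -> mediator_put (fo Fb b) e = fm Fb (lput P b e).
Proof.
  intro he. unfold mediator_put. rewrite Psi_Fb_ob. simpl. unfold po_of.
  destruct (@preimP _ _ J b) as [a <-|n]; [|reflexivity].
  destruct HPQ as [[HPQo _] HPQp]. simpl in HPQo.
  set (y := lput P (fo (lget J) a) e).
  assert (hy : dom y = fo (lget J) a) by now apply (put_dom (proj2 HP)).
  rewrite <- (get_put HJp a y hy).
  change (lput J a y) with (lput (lcomp P J) a e). rewrite (HPQp a e he). simpl.
  change (fm Fb (fm (lget J) ?f)) with (fm (fcomp Fb (lget J)) f).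
  rewrite (proj2 (proj1 Hpush)). simpl.
  rewrite (get_put HFp); [reflexivity|].
  apply (put_dom (proj2 HQ)). now rewrite he, HPQo.
Qed.

Variable K0 : FunD D X.
Hypotheses (HK0 : is_functor K0) (HK0F : fun_eq (fcomp K0 Fb) (lget P))
  (HK0J : fun_eq (fcomp K0 Jb) (lget Q)).

Let K : LensD D X := {| lget := K0; lput := mediator_put |}.

Lemma mediator_lens : is_lens K.
Proof.
  split; [exact HK0|]. apply lens_structure_of_laws_at.
  intro x. destruct (pushout_ob_cases x) as [[c ->]|[b ->]].
  - apply (lens_laws_at_image Jb Q K0 mediator_put HJb HQ HK0 HK0J).
    intros c' e _. apply mediator_put_Jb.
  - exact (lens_laws_at_image Fb P K0 mediator_put HFb HP HK0 HK0F mediator_put_Fb b).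
Qed.

Lemma mediator_Fb : lens_eq (lcomp K FbL) P.
Proof.
  split; [exact HK0F|]. intros b e he.
  assert (he' : dom e = fo (lget P) b) by (rewrite he; apply HK0F).
  cbn [lcomp lput lget K FbL]. rewrite (mediator_put_Fb b e he').
  apply (dput_fm pushout_Fb_dopf HFb). now apply (put_dom (proj2 HP)).
Qed.

Lemma mediator_Jb : lens_eq (lcomp K JbL) Q.
Proof.
  split; [exact HK0J|]. intros c e he.
  assert (he' : dom e = fo (lget Q) c) by (rewrite he; apply HK0J).
  cbn [lcomp lput lget K JbL]. rewrite mediator_put_Jb.
  apply (dput_fm pushout_Jb_dopf HJb). now apply (put_dom (proj2 HQ)).
Qed.

Hypothesis HK0u : forall K' : FunD D X, is_functor K' ->
  fun_eq (fcomp K' Fb) (lget P) -> fun_eq (fcomp K' Jb) (lget Q) -> fun_eq K' K0.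

Lemma mediator_unique (K' : LensD D X) : is_lens K' ->
  lens_eq (lcomp K' FbL) P -> lens_eq (lcomp K' JbL) Q -> lens_eq K' K.
Proof.
  intros [HK'f HK'p] [EF PF] [EJ PJ]. split; [now apply HK0u|].
  intros x e he. cbn [lput K].
  destruct (pushout_ob_cases x) as [[c ->]|[b ->]].
  - rewrite mediator_put_Jb, <- (PJ c e he). symmetry.
    apply (dput_lift pushout_Jb_dopf). now apply (put_dom HK'p).
  - rewrite mediator_put_Fb by (rewrite he; apply EF).
    rewrite <- (PF b e he). symmetry.
    apply (dput_lift pushout_Fb_dopf). now apply (put_dom HK'p).
Qed.
End Universal.

Lemma lens_pushout : is_pushout_lens J F FbL JbL.
Proof.
  split; [exact lens_pushout_square|].
  intros X P Q HP HQ HPQ.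
  destruct (proj2 Hpush X (lget P) (lget Q) (proj1 HP) (proj1 HQ) (proj1 HPQ))
    as [K0 [HK0 [HK0F [HK0J HK0u]]]].
  exists {| lget := K0; lput := mediator_put P Q |}.
  split; [now apply mediator_lens|]. split; [now apply mediator_Fb|].
  split; [now apply mediator_Jb|]. now apply mediator_unique.
Qed.
End LensPushout.

Theorem theorem5p4 (A B C D : Cat) (J : LensD A B) (F : LensD A C)
    (Fb : FunD B D) (Jb : FunD C D) :
  is_lens J -> is_lens F -> lens_monic J ->
  discrete_opfibration (lget F) ->
  is_functor Fb -> is_functor Jb ->
  is_pushout_cat (lget J) (lget F) Fb Jb ->
  exists (pF : ob B -> mor D -> mor B) (pJ : ob C -> mor D -> mor C),
    is_lens_structure Fb pF /\ is_lens_structure Jb pJ /\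
    (forall pF', is_lens_structure Fb pF' ->
       forall x b, dom b = fo Fb x -> pF' x b = pF x b) /\
    (forall pJ', is_lens_structure Jb pJ' ->
       forall x b, dom b = fo Jb x -> pJ' x b = pJ x b) /\
    is_pushout_lens J F {| lget := Fb; lput := pF |} {| lget := Jb; lput := pJ |}.
Proof.
  intros [HJf HJp] [HFf HFp] HM HFd HFb HJb Hpush.
  destruct (lens_monic_injective J HJf HJp HM) as [HJo HJm].
  destruct (proj2 Hpush _ _ _ (po_inB_functor HJf HJp HJo HFf HFp HFd)
              (po_inC_functor HJf HJp HJo HFf HFp) (po_inB_inC_comm HJf HJp HJo HJm HFf HFp))
    as [Psi [HPsi [HPsiB [HPsiC _]]]].
  pose proof (pushout_Fb_dopf HJf HJp HJo HJm HFf HFp HFd HFb HJb Hpush Psi HPsi HPsiB HPsiC)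
    as HFbd.
  pose proof (pushout_Jb_dopf HJf HJp HJo HFf HFp HFb HJb Hpush Psi HPsi HPsiB HPsiC)
    as HJbd.
  exists (dput Fb), (dput Jb).
  split; [exact (dput_lens HFbd HFb)|].
  split; [exact (dput_lens HJbd HJb)|].
  split; [exact (lens_structure_dput HFbd)|].
  split; [exact (lens_structure_dput HJbd)|].
  exact (lens_pushout HJf HJp HJo HJm HFf HFp HFd HFb HJb Hpush Psi HPsi HPsiB HPsiC).
Qed.
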